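(* Let $T(n) = (3n+1)/2^{v_2(3n+1)}$ for odd $n \ge 1$, and say an odd $n \equiv 1 \pmod 4$ produces $(L,G)=(1,1)$ if $T(n)\equiv 3 \pmod 4$ and $T(T(n)) \equiv 1 \pmod 4$. For $r \in \{0,\dots,63\}$ with $r \equiv 1 \pmod 4$, consider the integers $n = 64a + r$, $a \ge 0$. Then the set of such $r$ for which some $n = 64a+r$ produces $(L,G)=(1,1)$ is exactly $\{21,25,29,37,53,57\}$; for $r \in \{25,29,57\}$ every $n = 64a+r$ produces $(L,G)=(1,1)$ (unconditional), while for $r \in \{21,37,53\}$ this holds for some but not all $a$ (conditional). In particular the three conditional classes $21,37,53$ all satisfy $r \equiv 5 \pmod 8$.
   Context: $v_2$ is the $2$-adic valuation. $(L,G)=(1,1)$ means that, in the orbit of $n$ under $T$ with burst indicator $X_t = \mathbf{1}[n_t \equiv 1 \pmod 4]$, the burst run starting at $n$ has length $1$ and the following gap run has length $1$. *)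

From mathcomp Require Import all_boot.
Set Implicit Arguments. Unset Strict Implicit. Unset Printing Implicit Defensive.

Definition v2 (m : nat) : nat := logn 2 m.

Definition T (n : nat) : nat := (3 * n + 1) %/ 2 ^ v2 (3 * n + 1).

Definition produces11 (n : nat) : Prop :=
  [/\ odd n, n %% 4 = 1, T n %% 4 = 3 & T (T n) %% 4 = 1].

(** On a residue class [n = 2^k a + r] with [j = v2 (3r+1) < k], the Syracuse
    map is affine: [T n = 2^(k-j) (3a) + T r].  So [T n = T r (mod 4)] as soon
    as [j + 2 <= k], and applying this twice, [T (T n) = T (T r) (mod 4)] as
    soon as the two valuations along the orbit of [r] sum to at most [k - 2]
    (needed only when [T r = 3 (mod 4)]: otherwise the pattern fails at the
    first step anyway).  For such [r] the class modulo 64 decides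
    [(L,G) = (1,1)] outright, by a finite computation.  Among the sixteen
    classes [r = 1 (mod 4)] only [21], [37], [53] violate these bounds
    (valuations [6], [4 + 1], [5]); for them explicit members go either way. *)
From mathcomp Require Import all_boot.
From mathcomp Require Import zify.

Lemma T_odd_part n j u : 3 * n + 1 = 2 ^ j * u -> odd u -> T n = u.
Proof.
move=> def_n odd_u; rewrite /T /v2 def_n.
have u_gt0 : 0 < u by case: u odd_u {def_n}.
have co2u : coprime 2 u by rewrite coprime2n.
by rewrite lognM ?expn_gt0 // pfactorK // (logn_coprime co2u) addn0 mulKn ?expn_gt0.
Qed.

Lemma T_residue_affine k a r : v2 (3 * r + 1) < k ->
  T (2 ^ k * a + r) = 2 ^ (k - v2 (3 * r + 1)) * (3 * a) + T r.
Proof.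
rewrite /v2 => lt_jk; set j := logn 2 (3 * r + 1) in lt_jk *.
have r_gt0 : 0 < 3 * r + 1 by rewrite addn1.
have [u co2u def_r] := pfactor_coprime (isT : prime 2) r_gt0.
rewrite -/j in def_r.
have odd_u : odd u by rewrite -coprime2n.
have -> : T r = u by apply: (@T_odd_part _ j); rewrite // def_r mulnC.
apply: (@T_odd_part _ j).
  rewrite -{1}(subnKC (ltnW lt_jk)) expnD mulnDr; nia.
by rewrite oddD oddM oddX subn_eq0 leqNgt lt_jk orbF.
Qed.

Lemma pow2MD_mod4 i b c : 2 <= i -> 2 ^ i * b + c = c %[mod 4].
Proof. by move=> le2i; rewrite -(subnKC le2i) expnD (mulnC (2 ^ 2)) mulnAC modnMDl. Qed.

Lemma T_residue_mod4 k a r : v2 (3 * r + 1) + 2 <= k ->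
  T (2 ^ k * a + r) = T r %[mod 4].
Proof. by move=> le_jk; rewrite T_residue_affine ?pow2MD_mod4 //; lia. Qed.

Definition T2_valuation r := v2 (3 * r + 1) + v2 (3 * T r + 1).

Lemma produces11_residue k a r : v2 (3 * r + 1) + 2 <= k ->
    (T r %% 4 = 3 -> T2_valuation r + 2 <= k) ->
  produces11 (2 ^ k * a + r) <-> produces11 r.
Proof.
rewrite /T2_valuation => le_j1k le_j2k.
have odd_n : odd (2 ^ k * a + r) = odd r.
  by rewrite oddD oddM oddX eqn0Ngt (_ : 0 < k) //; lia.
rewrite /produces11 odd_n pow2MD_mod4 ?(T_residue_mod4 _ a _ le_j1k); last by lia.
case: (T r %% 4 =P 3) => [T3 | T_not3]; last by split=> -[] _ _ /T_not3 [].
rewrite T_residue_affine; last by lia.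
by rewrite (T_residue_mod4 _ (3 * a)) //; move: (le_j2k T3); lia.
Qed.

Definition produces11b n :=
  [&& odd n, n %% 4 == 1, T n %% 4 == 3 & T (T n) %% 4 == 1].

Lemma produces11P n : reflect (produces11 n) (produces11b n).
Proof.
by apply: (iffP and4P) => -[? /eqP? /eqP? /eqP?]; split=> //; apply/eqP.
Qed.

Lemma residues_mod64 r : r < 64 -> r %% 4 = 1 -> r \notin [:: 21; 37; 53] ->
  [/\ v2 (3 * r + 1) + 2 <= 6, T r %% 4 = 3 -> T2_valuation r + 2 <= 6
    & produces11b r = (r \in [:: 25; 29; 57])].
Proof.
move=> lt_r64 r_mod4 r_det.
have : all (fun s => (s %% 4 == 1) ==> (s \notin [:: 21; 37; 53]) ==>
              [&& v2 (3 * s + 1) + 2 <= 6, (T s %% 4 == 3) ==> (T2_valuation s + 2 <= 6)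
                & produces11b s == (s \in [:: 25; 29; 57])])
         (iota 0 64) by vm_compute.
move/allP/(_ r); rewrite mem_iota add0n leq0n lt_r64 r_mod4 r_det eqxx.
move=> /(_ isT) /and3P[-> /implyP le_j2 /eqP->].
by split=> // /eqP /le_j2.
Qed.

Lemma produces11_mod64 a r : r < 64 -> r %% 4 = 1 -> r \notin [:: 21; 37; 53] ->
  produces11 (64 * a + r) <-> r \in [:: 25; 29; 57].
Proof.
move=> lt_r64 r_mod4 r_det.
have [le_j1 le_j2 <-] := residues_mod64 r lt_r64 r_mod4 r_det.
exact: iff_trans (produces11_residue 6 a r le_j1 le_j2) (rwP (produces11P r)).
Qed.

Lemma residues_mod64_conditional r : r \in [:: 21; 37; 53] ->
  (exists a, produces11 (64 * a + r)) /\ ~ produces11 r.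
Proof.
rewrite !inE => /or3P[]/eqP->; split=> [|/produces11P //].
- by exists 6; apply/produces11P.
- by exists 1; apply/produces11P.
- by exists 1; apply/produces11P.
Qed.

Theorem corollary5p2 :
  (forall r : nat, r < 64 -> r %% 4 = 1 ->
     ((exists a : nat, produces11 (64 * a + r)) <->
      r \in [:: 21; 25; 29; 37; 53; 57]))
  /\ (forall r : nat, r \in [:: 25; 29; 57] ->
        forall a : nat, produces11 (64 * a + r))
  /\ (forall r : nat, r \in [:: 21; 37; 53] ->
        (exists a : nat, produces11 (64 * a + r)) /\
        (exists a : nat, ~ produces11 (64 * a + r)))
  /\ (forall r : nat, r \in [:: 21; 37; 53] -> r %% 8 = 5).
Proof.
have memE r : (r \in [:: 21; 25; 29; 37; 53; 57]) =
              (r \in [:: 21; 37; 53]) || (r \in [:: 25; 29; 57]).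
  by rewrite !inE; lia.
split; last split; last split.
- move=> r lt_r64 r_mod4; rewrite memE.
  case: (boolP (r \in [:: 21; 37; 53])) => [r_cond | r_det] /=.
    by split=> // _; case: (residues_mod64_conditional r r_cond).
  split=> [[a /(produces11_mod64 a r lt_r64 r_mod4 r_det)] // | r_pos].
  by exists 0; apply/(produces11_mod64 0 r lt_r64 r_mod4 r_det).
- move=> r r_pos a.
  have [lt_r64 r_mod4 r_det] : [/\ r < 64, r %% 4 = 1 & r \notin [:: 21; 37; 53]].
    by move: r_pos; rewrite !inE => /or3P[]/eqP->.
  exact/(produces11_mod64 a r lt_r64 r_mod4 r_det).
- by move=> r /residues_mod64_conditional [ex_r not_r]; split=> //; exists 0.
- by move=> r; rewrite !inE => /or3P[]/eqP->.
Qed.
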